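(* Let $k\ge0$ be an integer. For $j\in\{1,2\}$ let $(\pi_j^{\mathrm{pre}},q_j^{\mathrm{pre}})$ and $(\pi_j^{\mathrm{post}},q_j^{\mathrm{post}})$ be pre- and post-branch (policy, dynamics) pairs, and let $\eta_j=\eta_k(\pi_j^{\mathrm{pre}},q_j^{\mathrm{pre}};\pi_j^{\mathrm{post}},q_j^{\mathrm{post}})$. For $t\ge0$ and $0\le i\le t$ let $\nu_{t,i}$ be the law of $s_i$ in the branched construction for time $t$ using the pairs of index $j=1$. Suppose that for all $t\ge0$: (i) for all $0\le i<m_t$: $\mathbb E_{s\sim\nu_{t,i},\,a\sim\pi_1^{\mathrm{pre}}(\cdot\mid s)}\big[D_{TV}(q_1^{\mathrm{pre}}(\cdot\mid s,a),q_2^{\mathrm{pre}}(\cdot\mid s,a))\big]\le\epsilon_m^{\mathrm{pre}}$; (ii) for all $m_t\le i<t$: $\mathbb E_{s\sim\nu_{t,i},\,a\sim\pi_1^{\mathrm{post}}(\cdot\mid s)}\big[D_{TV}(q_1^{\mathrm{post}}(\cdot\mid s,a),q_2^{\mathrm{post}}(\cdot\mid s,a))\big]\le\epsilon_m^{\mathrm{post}}$; and that $\sup_s D_{TV}(\pi_1^{\mathrm{pre}}(\cdot\mid s),\pi_2^{\mathrm{pre}}(\cdot\mid s))\le\epsilon_\pi^{\mathrm{pre}}$ and $\sup_s D_{TV}(\pi_1^{\mathrm{post}}(\cdot\mid s),\pi_2^{\mathrm{post}}(\cdot\mid s))\le\epsilon_\pi^{\mathrm{post}}$. Then $$|\eta_1-\eta_2|\le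 2r_{\max}\left[\frac{\gamma^{k+1}}{(1-\gamma)^2}(\epsilon_m^{\mathrm{pre}}+\epsilon_\pi^{\mathrm{pre}})+\frac{k}{1-\gamma}(\epsilon_m^{\mathrm{post}}+\epsilon_\pi^{\mathrm{post}})+\frac{\gamma^k}{1-\gamma}\epsilon_\pi^{\mathrm{pre}}+\frac{1}{1-\gamma}\epsilon_\pi^{\mathrm{post}}\right].$$
   Context: Let $\mathcal S$ and $\mathcal A$ be countable (e.g. finite) state and action spaces, $\rho_0$ a probability distribution on $\mathcal S$ (initial state distribution), $\gamma\in(0,1)$ a discount factor, and $r:\mathcal S\times\mathcal A\to\mathbb R$ a reward function with $|r(s,a)|\le r_{\max}$ for all $(s,a)$. A policy is a Markov kernel $\pi(a\mid s)$ from $\mathcal S$ to $\mathcal A$; a dynamics kernel is a Markov kernel $q(s'\mid s,a)$ from $\mathcal S\times\mathcal A$ to $\mathcal S$. For probability distributions $\mu,\nu$ on a countable set, $D_{TV}(\mu,\nu)=\frac12\sum_x|\mu(x)-\nu(x)|$. Branched return: given a ''pre-branch'' pair (policy $\pi^{\mathrm{pre}}$, dynamics $q^{\mathrm{pre}}$), a ''post-branch'' pair (policy $\pi^{\mathrm{post}}$, dynamics $q^{\mathrm{post}}$) and an integer $k\ge0$, for each $t\ge0$ let $m_t=\max(t-k,0)$ and generate $s_0\sim\rho_0$; for $0\le i<m_t$: $a_i\sim\pi^{\mathrm{pre}}(\cdot\mid s_i)$, $s_{i+1}\sim q^{\mathrm{pre}}(\cdot\mid s_i,a_i)$; for $m_t\le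 i<t$: $a_i\sim\pi^{\mathrm{post}}(\cdot\mid s_i)$, $s_{i+1}\sim q^{\mathrm{post}}(\cdot\mid s_i,a_i)$; finally $a_t\sim\pi^{\mathrm{post}}(\cdot\mid s_t)$. Let $d_t$ be the law of $(s_t,a_t)$ so produced. The $k$-branched return is $\eta_k(\pi^{\mathrm{pre}},q^{\mathrm{pre}};\pi^{\mathrm{post}},q^{\mathrm{post}})=\sum_{t\ge0}\gamma^t\,\mathbb E_{(s,a)\sim d_t}[r(s,a)]$. (Thus the state at time $t$ is obtained by following the pre-branch pair up to time $t-k$ and then the post-branch pair for the remaining at most $k$ steps.) *)

From Stdlib Require Import Reals Lra Lia Classical ClassicalEpsilon.
Open Scope R_scope.

(* States and actions: countable spaces, modelled as nat (any countable set
   embeds in nat). *)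

(* Sum of a real series over nat: its limit (infinite_sum) when it exists,
   arbitrary otherwise.  All sums used below converge. *)
Definition tsum (f : nat -> R) : R :=
  epsilon (inhabits 0) (fun l => infinite_sum f l).

Definition is_dist (p : nat -> R) : Prop :=
  (forall x, 0 <= p x) /\ infinite_sum p 1.

(* policy pi s a = pi(a|s); dynamics q s a s' = q(s'|s,a) *)
Definition policy := nat -> nat -> R.
Definition dynamics := nat -> nat -> nat -> R.

Definition is_policy (pi : policy) : Prop := forall s, is_dist (pi s).
Definition is_dynamics (q : dynamics) : Prop :=
  forall s a, is_dist (q s a).

Definition D_TV (mu nu : nat -> R) : R :=
  / 2 * tsum (fun x => Rabs (mu x - nu x)).

Definition step (pi : policy) (q : dynamics) (nu : nat -> R) : nat -> R :=
  fun s' => tsum (fun s => tsum (fun a => nu s * pi s a * q s a s')).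

(* m_t = max(t-k,0) (truncated subtraction on nat) *)
Definition m_t (k t : nat) : nat := (t - k)%nat.

Fixpoint state_law (rho0 : nat -> R) (k : nat)
    (pipre : policy) (qpre : dynamics) (pipost : policy) (qpost : dynamics)
    (t i : nat) : nat -> R :=
  match i with
  | O => rho0
  | S i' =>
      let nu := state_law rho0 k pipre qpre pipost qpost t i' in
      if Nat.ltb i' (m_t k t) then step pipre qpre nu else step pipost qpost nu
  end.

Definition eta_k (rho0 : nat -> R) (gamma : R) (r : nat -> nat -> R) (k : nat)
    (pipre : policy) (qpre : dynamics) (pipost : policy) (qpost : dynamics) : R :=
  tsum (fun t =>
    gamma ^ t *
    tsum (fun s => tsum (fun a =>
      state_law rho0 k pipre qpre pipost qpost t t s * pipost s a * r s a))).

(* Write ‖μ - ν‖ = Σ_x |μ x - ν x| = 2 D_TV(μ, ν).  The proof is a simulation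
   argument in three steps.
   1. One step of two (policy, dynamics) pairs from two state laws increases
      their L1 distance by at most the mean model error plus the mean policy
      error ([step_L1]); along the branched construction for time t this gives
      ‖ν¹_t - ν²_t‖ ≤ 2 ((t-k)⁺ c_pre + k c_post), where c = ε_m + ε_π
      ([final_state_L1]).
   2. The expected rewards at time t then differ by at most
      r_max (‖ν¹_t - ν²_t‖ + 2 ε_π^post) ([reward_step_gap]).
   3. Summing against γ^t, with Σ_t γ^t (t-k)⁺ ≤ γ^{k+1}/(1-γ)², yields the
      bound ([discounted_gap]); the term γ^k ε_π^pre/(1-γ) is slack. *)

From Stdlib Require Import Reals Lra Lia ClassicalEpsilon FunctionalExtensionality.
From Coquelicot Require Import Coquelicot.
Open Scope R_scope.

Lemma tsum_Series (f : nat -> R) : ex_series f -> tsum f = Series f.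
Proof.
  intros H. unfold tsum.
  assert (Hl : infinite_sum f (Series f)) by apply is_series_Reals, Series_correct, H.
  assert (E := epsilon_spec (inhabits 0) (fun l => infinite_sum f l) (ex_intro _ _ Hl)).
  simpl in E. apply is_series_Reals, is_series_unique in E. symmetry; exact E.
Qed.

Lemma Series_le_bound (a : nat -> R) (M : R) : ex_series a -> (forall N, sum_f_R0 a N <= M) -> Series a <= M.
Proof.
  intros H HM. apply Series_correct, is_series_Reals in H.
  apply Rle_cv_lim with (Un := fun N => sum_f_R0 a N) (Vn := fun _ => M); auto.
  intros e He; exists 0%nat; intros; unfold R_dist. rewrite Rminus_diag, Rabs_R0; lra.
Qed.

Lemma Series_abs_bound (a : nat -> R) (M : R) : ex_series a -> (forall N, Rabs (sum_f_R0 a N) <= M) ->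
  Rabs (Series a) <= M.
Proof.
  intros H HM. apply Rabs_le. split.
  - assert (E : Series (fun n => - a n) <= M).
    { apply Series_le_bound; [apply (ex_series_opp a H)|]. intro N.
      rewrite (sum_eq _ (fun n => a n * -1)) by (intros; ring). rewrite <- scal_sum.
      specialize (HM N). apply Rabs_le_between in HM. lra. }
    rewrite Series_opp in E. lra.
  - apply Series_le_bound; auto. intro N. specialize (HM N). apply Rabs_le_between in HM. lra.
Qed.

Lemma Series_ge0 (a : nat -> R) : (forall n, 0 <= a n) -> ex_series a -> 0 <= Series a.
Proof.
  intros Hp H. apply Series_correct, is_series_Reals in H.
  apply Rle_cv_lim with (Vn := fun N => sum_f_R0 a N) (Un := fun _ => 0); auto.
  - intros; apply cond_pos_sum; auto.
  - intros e He; exists 0%nat; intros; unfold R_dist. rewrite Rminus_diag, Rabs_R0; lra.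
Qed.

Lemma sum_le_Series (a : nat -> R) (N : nat) : (forall n, 0 <= a n) -> ex_series a -> sum_f_R0 a N <= Series a.
Proof.
  intros Hp H. rewrite (Series_incr_n a (S N)) by (auto; lia). simpl pred.
  assert (0 <= Series (fun k => a (S N + k)%nat)).
  { apply Series_ge0; auto. apply (ex_series_incr_n a (S N)); auto. }
  lra.
Qed.

Lemma ex_series_pos_bound (a : nat -> R) (M : R) : (forall n, 0 <= a n) -> (forall N, sum_f_R0 a N <= M) ->
  ex_series a.
Proof.
  intros Hp HM. apply ex_series_Reals_1, growing_cv.
  - intro n. simpl. specialize (Hp (S n)). lra.
  - exists M. intros x [n ->]. auto.
Qed.

Lemma Series_dom (f g : nat -> R) : (forall n, Rabs (f n) <= g n) -> ex_series g ->
  Rabs (Series f) <= Series g.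
Proof.
  intros H Hg. eapply Rle_trans; [apply Series_Rabs|].
  - apply (ex_series_le (fun n => Rabs (f n)) g); auto. intros; rewrite Rabs_Rabsolu; auto.
  - apply Series_le; auto. intros; split; auto. apply Rabs_pos.
Qed.

Lemma ex_series_sum (g : nat -> nat -> R) (J : nat) :
  (forall j, ex_series (fun i => g i j)) -> ex_series (fun i => sum_f_R0 (g i) J).
Proof.
  intros H; induction J; simpl.
  - apply H.
  - apply (ex_series_plus (fun i => sum_f_R0 (g i) J) (fun i => g i (S J))); auto.
Qed.

Lemma Series_sum (g : nat -> nat -> R) (J : nat) :
  (forall j, ex_series (fun i => g i j)) ->
  Series (fun i => sum_f_R0 (g i) J) = sum_f_R0 (fun j => Series (fun i => g i j)) J.
Proof.
  intros H; induction J; simpl.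
  - reflexivity.
  - rewrite Series_plus, IHJ; auto. apply ex_series_sum; auto.
Qed.

Definition dsum (f : nat -> nat -> R) : R := Series (fun i => Series (f i)).
Definition dsummable (f : nat -> nat -> R) : Prop :=
  (forall i, ex_series (f i)) /\ ex_series (fun i => Series (f i)).

Lemma dsum_swap_le (f : nat -> nat -> R) : (forall i j, 0 <= f i j) -> dsummable f ->
  dsummable (fun j i => f i j) /\ dsum (fun j i => f i j) <= dsum f.
Proof.
  intros Hp [H1 H2].
  assert (Hcol : forall j, ex_series (fun i => f i j)).
  { intro j. apply (ex_series_pos_bound _ (dsum f)); auto. intro N.
    eapply Rle_trans.
    - apply (sum_Rle _ (fun i => Series (f i))). intros n _.
      eapply Rle_trans; [|apply (sum_le_Series (f n) j); auto].
      destruct j; simpl; [lra|].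
      assert (0 <= sum_f_R0 (f n) j) by (apply cond_pos_sum; auto). lra.
    - apply sum_le_Series; auto. intros; apply Series_ge0; auto. }
  assert (Hpart : forall J, sum_f_R0 (fun j => Series (fun i => f i j)) J <= dsum f).
  { intro J. rewrite <- Series_sum by auto. apply Series_le; auto.
    intros i; split; [apply cond_pos_sum; auto|apply sum_le_Series; auto]. }
  assert (Hrow : ex_series (fun j => Series (fun i => f i j))).
  { apply (ex_series_pos_bound _ (dsum f)); auto. intros; apply Series_ge0; auto. }
  split; [split; auto|]. apply Series_le_bound; auto.
Qed.

Lemma tonelli (f : nat -> nat -> R) : (forall i j, 0 <= f i j) -> dsummable f ->
  dsummable (fun j i => f i j) /\ dsum (fun j i => f i j) = dsum f.
Proof.
  intros Hp Hd.
  destruct (dsum_swap_le f Hp Hd) as [Hd' Hle].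
  destruct (dsum_swap_le (fun j i => f i j) (fun i j => Hp j i) Hd') as [_ Hge].
  split; auto. apply Rle_antisym; auto.
Qed.

Lemma tonelli_triple (w : nat -> nat -> nat -> R) : (forall s a x, 0 <= w s a x) ->
  (forall s a, ex_series (w s a)) -> dsummable (fun s a => Series (w s a)) ->
  (forall x, dsummable (fun s a => w s a x)) /\ ex_series (fun x => dsum (fun s a => w s a x))
  /\ Series (fun x => dsum (fun s a => w s a x)) = dsum (fun s a => Series (w s a)).
Proof.
  intros Hp Hi [D1 D2].
  assert (Hs : forall s, dsummable (fun x a => w s a x) /\
     dsum (fun x a => w s a x) = Series (fun a => Series (w s a))).
  { intro s. apply (tonelli (fun a x => w s a x)); auto. split; auto. }
  set (g := fun s x => Series (fun a => w s a x)).
  assert (Hg : dsummable g).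
  { split; [intro s; apply (proj1 (Hs s))|].
    apply (ex_series_ext (fun s => Series (fun a => Series (w s a)))); auto.
    intro s. symmetry. apply (proj2 (Hs s)). }
  assert (Hgp : forall s x, 0 <= g s x).
  { intros; apply Series_ge0; auto. apply (proj1 (Hs s)). }
  destruct (tonelli g Hgp Hg) as [[E1 E2] E3].
  split; [|split].
  - intro x. split; [intro s; apply (proj1 (proj1 (Hs s)))|apply E1].
  - apply E2.
  - change (dsum (fun x s => g s x) = dsum (fun s a => Series (w s a))). rewrite E3.
    unfold dsum. apply Series_ext. intro s. apply (proj2 (Hs s)).
Qed.

Lemma dsum_dom (f g : nat -> nat -> R) : (forall i j, Rabs (f i j) <= g i j) -> dsummable g ->
  dsummable f /\ Rabs (dsum f) <= dsum g.
Proof.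
  intros H [G1 G2].
  assert (F1 : forall i, ex_series (f i)) by (intro i; apply (ex_series_le (f i) (g i)); auto).
  assert (B : forall i, Rabs (Series (f i)) <= Series (g i)) by (intro; apply Series_dom; auto).
  split; [split; auto|].
  - apply (ex_series_le (fun i => Series (f i)) (fun i => Series (g i))); auto.
  - apply Series_dom; auto.
Qed.

Lemma dsum_ge0 (f : nat -> nat -> R) : (forall i j, 0 <= f i j) -> dsummable f -> 0 <= dsum f.
Proof. intros H [D1 D2]. apply Series_ge0; auto. intro; apply Series_ge0; auto. Qed.

Lemma dsum_plus (f g : nat -> nat -> R) : dsummable f -> dsummable g ->
  dsummable (fun i j => f i j + g i j) /\ dsum (fun i j => f i j + g i j) = dsum f + dsum g.
Proof.
  intros [F1 F2] [G1 G2].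
  assert (E : forall i, Series (fun j => f i j + g i j) = Series (f i) + Series (g i))
    by (intro; apply Series_plus; auto).
  split; [split|].
  - intro i. apply (ex_series_plus (f i) (g i)); auto.
  - apply (ex_series_ext (fun i => Series (f i) + Series (g i))); [intros; auto|].
    apply (ex_series_plus (fun i => Series (f i)) (fun i => Series (g i))); auto.
  - unfold dsum. rewrite (Series_ext _ (fun i => Series (f i) + Series (g i))) by auto.
    apply Series_plus; auto.
Qed.

Lemma dsum_scal (c : R) (f : nat -> nat -> R) : dsum (fun i j => c * f i j) = c * dsum f.
Proof.
  unfold dsum. rewrite (Series_ext _ (fun i => c * Series (f i))).
  - apply Series_scal_l.
  - intros; apply Series_scal_l.
Qed.

Lemma dsummable_scal (c : R) (f : nat -> nat -> R) : dsummable f -> dsummable (fun i j => c * f i j).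
Proof.
  intros [F1 F2]. split.
  - intro i. apply (ex_series_scal_l c (f i)); auto.
  - apply (ex_series_ext (fun i => c * Series (f i))); [intros; symmetry; apply Series_scal_l|].
    apply (ex_series_scal_l c (fun i => Series (f i))); auto.
Qed.

Lemma dsum_minus (f g : nat -> nat -> R) : dsummable f -> dsummable g ->
  dsummable (fun i j => f i j - g i j) /\ dsum (fun i j => f i j - g i j) = dsum f - dsum g.
Proof.
  intros Hf Hg.
  destruct (dsum_plus f _ Hf (dsummable_scal (-1) g Hg)) as [A B].
  rewrite dsum_scal in B.
  replace (fun i j => f i j - g i j) with (fun i j => f i j + -1 * g i j)
    by (do 2 (apply functional_extensionality; intro); ring).
  split; auto. rewrite B; ring.
Qed.

Lemma tsum2_dsum (f : nat -> nat -> R) : dsummable f -> tsum (fun s => tsum (fun a => f s a)) = dsum f.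
Proof.
  intros [F1 F2].
  replace (fun s => tsum (fun a => f s a)) with (fun s => Series (f s)).
  - apply tsum_Series; auto.
  - apply functional_extensionality. intro s. symmetry. apply tsum_Series; auto.
Qed.

Definition dist (p : nat -> R) : Prop := (forall x, 0 <= p x) /\ ex_series p /\ Series p = 1.
Definition pol (pi : policy) : Prop := forall s, dist (pi s).
Definition dyn (q : dynamics) : Prop := forall s a, dist (q s a).

Lemma is_dist_dist (p : nat -> R) : is_dist p -> dist p.
Proof.
  intros [H1 H2]. apply is_series_Reals in H2. split; auto. split.
  - eexists; eauto.
  - apply is_series_unique; auto.
Qed.

Lemma is_policy_pol (pi : policy) : is_policy pi -> pol pi.
Proof. intros H s. apply is_dist_dist, H. Qed.

Lemma is_dynamics_dyn (q : dynamics) : is_dynamics q -> dyn q.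
Proof. intros H s a. apply is_dist_dist, H. Qed.

Definition L1 (p q : nat -> R) : R := Series (fun x => Rabs (p x - q x)).

Lemma L1_summable (p q : nat -> R) : dist p -> dist q -> ex_series (fun x => Rabs (p x - q x)).
Proof.
  intros [P1 [P2 _]] [Q1 [Q2 _]].
  apply (ex_series_le (fun x => Rabs (p x - q x)) (fun x => p x + q x)).
  - intro x. change (Rabs (Rabs (p x - q x)) <= p x + q x). rewrite Rabs_Rabsolu.
    specialize (P1 x); specialize (Q1 x). unfold Rabs; destruct Rcase_abs; lra.
  - apply (ex_series_plus p q); auto.
Qed.

Lemma L1_range (p q : nat -> R) : dist p -> dist q -> 0 <= L1 p q <= 2.
Proof.
  intros Dp Dq. pose proof (L1_summable p q Dp Dq) as X.
  destruct Dp as [P1 [P2 P3]], Dq as [Q1 [Q2 Q3]]. split.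
  - apply Series_ge0; auto. intros; apply Rabs_pos.
  - unfold L1. replace 2 with (Series p + Series q) by lra.
    rewrite <- Series_plus by auto. apply Series_le.
    + intro x. specialize (P1 x); specialize (Q1 x). split; [apply Rabs_pos|].
      unfold Rabs; destruct Rcase_abs; lra.
    + apply (ex_series_plus p q); auto.
Qed.

Lemma D_TV_L1 (p q : nat -> R) : dist p -> dist q -> D_TV p q = / 2 * L1 p q.
Proof. intros Dp Dq. unfold D_TV. rewrite tsum_Series; auto. apply L1_summable; auto. Qed.

Lemma L1_self (p : nat -> R) : L1 p p = 0.
Proof.
  unfold L1. rewrite (Series_ext _ (fun x => 0 * 0)), Series_scal_l; [ring|].
  intro; rewrite Rminus_diag, Rabs_R0; ring.
Qed.

Lemma joint_dist (mu : nat -> R) (pi : policy) : dist mu -> pol pi ->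
  dsummable (fun s a => mu s * pi s a) /\ dsum (fun s a => mu s * pi s a) = 1 /\
  (forall s, Series (fun a => mu s * pi s a) = mu s).
Proof.
  intros [M1 [M2 M3]] HP.
  assert (E : forall s, Series (fun a => mu s * pi s a) = mu s).
  { intro s. rewrite Series_scal_l. destruct (HP s) as [_ [_ ->]]. ring. }
  split; [split|split]; auto.
  - intro s. apply (ex_series_scal_l (mu s) (pi s)), HP.
  - apply (ex_series_ext mu); auto.
  - unfold dsum. rewrite (Series_ext _ mu); auto.
Qed.

Lemma dsum_weighted (c : nat -> R) (kappa : nat -> nat -> R) (K : nat -> R) :
  (forall s, ex_series (kappa s)) -> (forall s, Series (kappa s) = K s) ->
  ex_series (fun s => c s * K s) ->
  dsummable (fun s a => c s * kappa s a) /\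
  dsum (fun s a => c s * kappa s a) = Series (fun s => c s * K s).
Proof.
  intros H1 H2 H3.
  assert (E : forall s, Series (fun a => c s * kappa s a) = c s * K s).
  { intro s. rewrite Series_scal_l, H2. auto. }
  split; [split|].
  - intro s. apply (ex_series_scal_l (c s) (kappa s)); auto.
  - apply (ex_series_ext (fun s => c s * K s)); auto.
  - unfold dsum. apply Series_ext; auto.
Qed.

Lemma Rabs_mult_diff (a b c d : R) : 0 <= a -> 0 <= d ->
  Rabs (a * b - c * d) <= a * Rabs (b - d) + Rabs (a - c) * d.
Proof.
  intros Ha Hd. replace (a * b - c * d) with (a * (b - d) + (a - c) * d) by ring.
  eapply Rle_trans; [apply Rabs_triang|].
  rewrite !Rabs_mult, (Rabs_pos_eq a), (Rabs_pos_eq d) by auto. lra.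
Qed.

Lemma joint_L1 (mu1 mu2 : nat -> R) (pi1 pi2 : policy) :
  dist mu1 -> dist mu2 -> pol pi1 -> pol pi2 ->
  dsummable (fun s a => Rabs (mu1 s * pi1 s a - mu2 s * pi2 s a)) /\
  dsum (fun s a => Rabs (mu1 s * pi1 s a - mu2 s * pi2 s a)) <=
    Series (fun s => mu1 s * L1 (pi1 s) (pi2 s)) + L1 mu1 mu2.
Proof.
  intros D1 D2 P1 P2.
  assert (A : dsummable (fun s a => mu1 s * Rabs (pi1 s a - pi2 s a)) /\
     dsum (fun s a => mu1 s * Rabs (pi1 s a - pi2 s a)) =
     Series (fun s => mu1 s * L1 (pi1 s) (pi2 s))).
  { apply dsum_weighted; [intro s; apply L1_summable; auto|reflexivity|].
    apply (ex_series_le (fun s => mu1 s * L1 (pi1 s) (pi2 s)) (fun s => 2 * mu1 s)).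
    - intro s. destruct (L1_range _ _ (P1 s) (P2 s)). destruct D1 as [M _].
      specialize (M s). change (Rabs (mu1 s * L1 (pi1 s) (pi2 s)) <= 2 * mu1 s).
      rewrite Rabs_pos_eq by (apply Rmult_le_pos; lra). nra.
    - apply (ex_series_scal_l 2 mu1), D1. }
  assert (B : dsummable (fun s a => Rabs (mu1 s - mu2 s) * pi2 s a) /\
     dsum (fun s a => Rabs (mu1 s - mu2 s) * pi2 s a) = Series (fun s => Rabs (mu1 s - mu2 s) * 1)).
  { apply dsum_weighted; [intro s; apply P2|intro s; apply P2|].
    apply (ex_series_ext (fun s => Rabs (mu1 s - mu2 s))); [intros; apply eq_sym, Rmult_1_r|].
    apply L1_summable; auto. }
  destruct A as [A1 A2], B as [B1 B2].
  destruct (dsum_plus _ _ A1 B1) as [C1 C2].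
  destruct (dsum_dom (fun s a => Rabs (mu1 s * pi1 s a - mu2 s * pi2 s a))
     (fun s a => mu1 s * Rabs (pi1 s a - pi2 s a) + Rabs (mu1 s - mu2 s) * pi2 s a))
    as [E1 E2]; auto.
  { intros s a. rewrite Rabs_Rabsolu. apply Rabs_mult_diff; [apply D1|apply P2]. }
  split; auto. eapply Rle_trans; [apply Rle_abs|]. eapply Rle_trans; [exact E2|].
  rewrite C2, A2, B2. unfold L1.
  rewrite (Series_ext (fun s => Rabs (mu1 s - mu2 s) * 1) (fun s => Rabs (mu1 s - mu2 s)))
    by (intros; ring).
  lra.
Qed.

Lemma mean_L1_bound (mu : nat -> R) (pi1 pi2 : policy) (e : R) :
  dist mu -> pol pi1 -> pol pi2 -> (forall s, L1 (pi1 s) (pi2 s) <= 2 * e) ->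
  Series (fun s => mu s * L1 (pi1 s) (pi2 s)) <= 2 * e.
Proof.
  intros [M1 [M2 M3]] P1 P2 H.
  eapply Rle_trans; [apply Series_le with (b := fun s => mu s * (2 * e))|].
  - intro s. destruct (L1_range _ _ (P1 s) (P2 s)). specialize (M1 s).
    split; [apply Rmult_le_pos; auto|apply Rmult_le_compat_l; auto].
  - apply (ex_series_scal_r (2 * e) mu M2).
  - rewrite Series_scal_r, M3. lra.
Qed.

Lemma step_props (mu : nat -> R) (pi : policy) (q : dynamics) : dist mu -> pol pi -> dyn q ->
  (forall x, dsummable (fun s a => mu s * pi s a * q s a x)) /\
  (forall x, step pi q mu x = dsum (fun s a => mu s * pi s a * q s a x)) /\
  dist (step pi q mu).
Proof.
  intros D P Q. destruct (joint_dist mu pi D P) as [J1 [J2 _]].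
  assert (E : (fun s a => Series (fun x => mu s * pi s a * q s a x)) = (fun s a => mu s * pi s a)).
  { do 2 (apply functional_extensionality; intro). rewrite Series_scal_l.
    destruct (Q x x0) as [_ [_ ->]]. ring. }
  destruct (tonelli_triple (fun s a x => mu s * pi s a * q s a x)) as [T1 [T2 T3]].
  - intros. apply Rmult_le_pos; [apply Rmult_le_pos|]; [apply D|apply P|apply Q].
  - intros s a. apply (ex_series_scal_l (mu s * pi s a) (q s a)), Q.
  - rewrite E. auto.
  - assert (S : forall x, step pi q mu x = dsum (fun s a => mu s * pi s a * q s a x)).
    { intro x. unfold step. apply tsum2_dsum, T1. }
    split; [|split; [|split; [|split]]]; auto.
    + intro x. rewrite S. apply dsum_ge0; [|apply T1].
      intros. apply Rmult_le_pos; [apply Rmult_le_pos|]; [apply D|apply P|apply Q].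
    + apply (ex_series_ext (fun x => dsum (fun s a => mu s * pi s a * q s a x))); auto.
    + rewrite (Series_ext _ (fun x => dsum (fun s a => mu s * pi s a * q s a x))) by auto.
      rewrite T3, E. auto.
Qed.

Lemma state_law_dist (rho0 : nat -> R) (k : nat) (pre : policy) (qpre : dynamics)
  (post : policy) (qpost : dynamics) (t i : nat) :
  dist rho0 -> pol pre -> dyn qpre -> pol post -> dyn qpost ->
  dist (state_law rho0 k pre qpre post qpost t i).
Proof.
  intros. induction i; simpl; auto.
  destruct (Nat.ltb i (m_t k t)); apply step_props; auto.
Qed.

Lemma model_err_summable (mu : nat -> R) (pi : policy) (q1 q2 : dynamics) :
  dist mu -> pol pi -> dyn q1 -> dyn q2 ->
  dsummable (fun s a => mu s * pi s a * L1 (q1 s a) (q2 s a)).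
Proof.
  intros D P Q1 Q2. destruct (joint_dist mu pi D P) as [J _].
  apply (dsum_dom _ (fun s a => 2 * (mu s * pi s a))).
  - intros s a. destruct (L1_range _ _ (Q1 s a) (Q2 s a)).
    assert (0 <= mu s * pi s a) by (apply Rmult_le_pos; [apply D|apply P]).
    rewrite Rabs_pos_eq by (apply Rmult_le_pos; lra). nra.
  - apply dsummable_scal; auto.
Qed.

Lemma model_err_L1 (mu : nat -> R) (pi : policy) (q1 q2 : dynamics) :
  dist mu -> pol pi -> dyn q1 -> dyn q2 ->
  tsum (fun s => tsum (fun a => mu s * pi s a * D_TV (q1 s a) (q2 s a))) =
  / 2 * dsum (fun s a => mu s * pi s a * L1 (q1 s a) (q2 s a)).
Proof.
  intros D P Q1 Q2.
  replace (fun s => tsum (fun a => mu s * pi s a * D_TV (q1 s a) (q2 s a)))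
    with (fun s => tsum (fun a => / 2 * (mu s * pi s a * L1 (q1 s a) (q2 s a)))).
  - rewrite <- dsum_scal. apply tsum2_dsum, dsummable_scal, model_err_summable; auto.
  - apply functional_extensionality; intro s. f_equal.
    apply functional_extensionality; intro a. rewrite D_TV_L1 by (apply Q1 || apply Q2). ring.
Qed.

Lemma model_err_ge0 (mu : nat -> R) (pi : policy) (q1 q2 : dynamics) :
  dist mu -> pol pi -> dyn q1 -> dyn q2 ->
  0 <= tsum (fun s => tsum (fun a => mu s * pi s a * D_TV (q1 s a) (q2 s a))).
Proof.
  intros D P Q1 Q2. rewrite model_err_L1 by auto.
  apply Rmult_le_pos; [lra|]. apply dsum_ge0; [|apply model_err_summable; auto].
  intros s a. apply Rmult_le_pos; [apply Rmult_le_pos; [apply D|apply P]|].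
  apply L1_range; auto.
Qed.

Lemma step_L1 (mu1 mu2 : nat -> R) (pi1 pi2 : policy) (q1 q2 : dynamics) :
  dist mu1 -> dist mu2 -> pol pi1 -> pol pi2 -> dyn q1 -> dyn q2 ->
  L1 (step pi1 q1 mu1) (step pi2 q2 mu2) <=
    dsum (fun s a => mu1 s * pi1 s a * L1 (q1 s a) (q2 s a))
    + Series (fun s => mu1 s * L1 (pi1 s) (pi2 s)) + L1 mu1 mu2.
Proof.
  intros D1 D2 P1 P2 Q1 Q2.
  destruct (step_props mu1 pi1 q1 D1 P1 Q1) as [S1 [S2 _]].
  destruct (step_props mu2 pi2 q2 D2 P2 Q2) as [U1 [U2 _]].
  destruct (joint_L1 mu1 mu2 pi1 pi2 D1 D2 P1 P2) as [K1 K2].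
  assert (A := model_err_summable mu1 pi1 q1 q2 D1 P1 Q1 Q2).
  assert (Jn : forall s a, 0 <= mu1 s * pi1 s a)
    by (intros; apply Rmult_le_pos; [apply D1|apply P1]).
  (* w s a x dominates, summand by summand, the difference of the two steps at x *)
  set (w := fun s a x => mu1 s * pi1 s a * Rabs (q1 s a x - q2 s a x)
                         + Rabs (mu1 s * pi1 s a - mu2 s * pi2 s a) * q2 s a x).
  assert (Wp : forall s a x, 0 <= w s a x).
  { intros. apply Rplus_le_le_0_compat; apply Rmult_le_pos; auto using Rabs_pos. apply Q2. }
  assert (We : forall s a, ex_series (w s a) /\ Series (w s a) =
     mu1 s * pi1 s a * L1 (q1 s a) (q2 s a) + Rabs (mu1 s * pi1 s a - mu2 s * pi2 s a)).
  { intros s a. pose proof (L1_summable _ _ (Q1 s a) (Q2 s a)) as X.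
    destruct (Q2 s a) as [_ [Y Z]].
    assert (X' := ex_series_scal_l (mu1 s * pi1 s a) _ X).
    assert (Y' := ex_series_scal_l (Rabs (mu1 s * pi1 s a - mu2 s * pi2 s a)) _ Y).
    split; [apply (ex_series_plus _ _ X' Y')|]. unfold w. rewrite Series_plus; auto.
    rewrite !Series_scal_l, Z. unfold L1. ring. }
  assert (WE : (fun s a => Series (w s a)) = (fun s a => mu1 s * pi1 s a * L1 (q1 s a) (q2 s a)
                                             + Rabs (mu1 s * pi1 s a - mu2 s * pi2 s a))).
  { do 2 (apply functional_extensionality; intro). apply We. }
  destruct (dsum_plus _ _ A K1) as [C1 C2].
  destruct (tonelli_triple w Wp (fun s a => proj1 (We s a))) as [T1 [T2 T3]];
    [rewrite WE; auto|].
  rewrite WE, C2 in T3.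
  assert (Pointwise : forall x, Rabs (step pi1 q1 mu1 x - step pi2 q2 mu2 x)
                                <= dsum (fun s a => w s a x)).
  { intro x. rewrite S2, U2. destruct (dsum_minus _ _ (S1 x) (U1 x)) as [M1 M2].
    rewrite <- M2. apply dsum_dom; auto. intros s a. unfold w.
    apply Rabs_mult_diff; [apply Jn|apply Q2]. }
  unfold L1 at 1. eapply Rle_trans.
  - apply Series_le with (b := fun x => dsum (fun s a => w s a x)); auto.
    intro; split; auto using Rabs_pos.
  - rewrite T3. lra.
Qed.

Definition expected_reward (mu : nat -> R) (pi : policy) (r : nat -> nat -> R) : R :=
  dsum (fun s a => mu s * pi s a * r s a).

Lemma expected_reward_bound (mu : nat -> R) (pi : policy) (r : nat -> nat -> R) (rmax : R) :
  dist mu -> pol pi -> (forall s a, Rabs (r s a) <= rmax) ->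
  dsummable (fun s a => mu s * pi s a * r s a) /\ Rabs (expected_reward mu pi r) <= rmax.
Proof.
  intros D P H. destruct (joint_dist mu pi D P) as [J1 [J2 _]].
  destruct (dsum_dom (fun s a => mu s * pi s a * r s a) (fun s a => rmax * (mu s * pi s a)))
    as [A B].
  - intros s a. assert (0 <= mu s * pi s a) by (apply Rmult_le_pos; [apply D|apply P]).
    rewrite Rabs_mult, (Rabs_pos_eq (mu s * pi s a)), Rmult_comm by auto.
    apply Rmult_le_compat_r; auto.
  - apply dsummable_scal; auto.
  - split; auto. rewrite dsum_scal, J2 in B. unfold expected_reward. lra.
Qed.

Lemma expected_reward_gap (mu1 mu2 : nat -> R) (pi1 pi2 : policy) (r : nat -> nat -> R) (rmax : R) :
  dist mu1 -> dist mu2 -> pol pi1 -> pol pi2 -> (forall s a, Rabs (r s a) <= rmax) ->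
  Rabs (expected_reward mu1 pi1 r - expected_reward mu2 pi2 r) <=
  rmax * (Series (fun s => mu1 s * L1 (pi1 s) (pi2 s)) + L1 mu1 mu2).
Proof.
  intros D1 D2 P1 P2 H.
  destruct (expected_reward_bound mu1 pi1 r rmax D1 P1 H) as [A1 _].
  destruct (expected_reward_bound mu2 pi2 r rmax D2 P2 H) as [A2 _].
  destruct (joint_L1 mu1 mu2 pi1 pi2 D1 D2 P1 P2) as [K1 K2].
  assert (Hrmax : 0 <= rmax) by (eapply Rle_trans; [apply Rabs_pos|apply (H 0%nat 0%nat)]).
  unfold expected_reward. destruct (dsum_minus _ _ A1 A2) as [_ M]. rewrite <- M.
  destruct (dsum_dom (fun s a => mu1 s * pi1 s a * r s a - mu2 s * pi2 s a * r s a)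
     (fun s a => rmax * Rabs (mu1 s * pi1 s a - mu2 s * pi2 s a))) as [_ B].
  - intros s a. replace (mu1 s * pi1 s a * r s a - mu2 s * pi2 s a * r s a)
      with ((mu1 s * pi1 s a - mu2 s * pi2 s a) * r s a) by ring.
    rewrite Rabs_mult, Rmult_comm. apply Rmult_le_compat_r; auto using Rabs_pos.
  - apply dsummable_scal; auto.
  - rewrite dsum_scal in B. eapply Rle_trans; [exact B|]. apply Rmult_le_compat_l; auto.
Qed.

Lemma sum_lin (A B : R) (f g : nat -> R) (N : nat) :
  sum_f_R0 (fun t => A * f t + B * g t) N = A * sum_f_R0 f N + B * sum_f_R0 g N.
Proof. induction N; simpl; [ring|]. rewrite IHN. ring. Qed.

Lemma geom_partial_le (gamma : R) (N : nat) : 0 < gamma < 1 ->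
  sum_f_R0 (fun t => gamma ^ t) N <= 1 / (1 - gamma).
Proof.
  intros H. rewrite tech3 by lra. unfold Rdiv. apply Rmult_le_compat_r.
  - apply Rlt_le, Rinv_0_lt_compat; lra.
  - assert (0 < gamma ^ S N) by (apply pow_lt; lra). lra.
Qed.

Lemma geom_weighted_partial (gamma : R) (N : nat) : 0 < gamma < 1 ->
  sum_f_R0 (fun t => gamma ^ t * INR t) N
  + gamma ^ S N * INR (S N) / (1 - gamma) + gamma ^ S (S N) / (1 - gamma) ^ 2
  = gamma / (1 - gamma) ^ 2.
Proof.
  intros H. induction N.
  - simpl sum_f_R0. simpl pow. simpl INR. field. lra.
  - rewrite <- IHN, tech5, !S_INR. simpl pow. field. lra.
Qed.

Lemma geom_shift_partial_le (gamma : R) (k N : nat) : 0 < gamma < 1 ->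
  sum_f_R0 (fun t => gamma ^ t * INR (t - k)) N <= gamma ^ S k / (1 - gamma) ^ 2.
Proof.
  intros H. assert (P : forall n, 0 <= gamma ^ n) by (intro; apply pow_le; lra).
  assert (Q : 0 < / (1 - gamma) ^ 2) by (apply Rinv_0_lt_compat, pow_lt; lra).
  revert N; induction k; intro N.
  - rewrite (sum_eq _ (fun t => gamma ^ t * INR t)) by (intros; rewrite Nat.sub_0_r; auto).
    rewrite pow_1, <- (geom_weighted_partial gamma N H).
    assert (0 <= gamma ^ S N * INR (S N) / (1 - gamma)).
    { unfold Rdiv. apply Rmult_le_pos; [apply Rmult_le_pos; auto using pos_INR|].
      apply Rlt_le, Rinv_0_lt_compat; lra. }
    assert (0 <= gamma ^ S (S N) / (1 - gamma) ^ 2) by (unfold Rdiv; apply Rmult_le_pos; [apply P|lra]).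
    lra.
  - destruct N.
    + simpl sum_f_R0. replace (0 - S k)%nat with 0%nat by lia. simpl INR.
      rewrite Rmult_0_r. unfold Rdiv. apply Rmult_le_pos; [apply P|lra].
    + (* shifting t by one turns the bound for k into the bound for k+1 *)
      rewrite decomp_sum by lia. simpl pred. simpl (0 - S k)%nat. rewrite Rmult_0_r, Rplus_0_l.
      rewrite (sum_eq _ (fun i => gamma ^ i * INR (i - k) * gamma)) by (intros; simpl; ring).
      rewrite <- scal_sum.
      replace (gamma ^ S (S k) / (1 - gamma) ^ 2) with (gamma * (gamma ^ S k / (1 - gamma) ^ 2))
        by (simpl; field; lra).
      apply Rmult_le_compat_l; [lra|apply IHk].
Qed.

Lemma ex_series_discounted (gamma M : R) (u : nat -> R) : 0 < gamma < 1 ->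
  (forall t, Rabs (u t) <= M) -> ex_series (fun t => gamma ^ t * u t).
Proof.
  intros Hg Hu.
  apply (ex_series_le (fun t => gamma ^ t * u t) (fun t => M * gamma ^ t)).
  - intro t. change (Rabs (gamma ^ t * u t) <= M * gamma ^ t).
    rewrite Rabs_mult, Rabs_pos_eq, Rmult_comm by (apply pow_le; lra).
    apply Rmult_le_compat_r; [apply pow_le; lra|auto].
  - apply (ex_series_scal_l M (fun t => gamma ^ t)), ex_series_geom.
    rewrite Rabs_pos_eq; lra.
Qed.

Lemma discounted_gap (gamma M A C : R) (k : nat) (u1 u2 : nat -> R) :
  0 < gamma < 1 -> 0 <= C ->
  (forall t, Rabs (u1 t) <= M) -> (forall t, Rabs (u2 t) <= M) ->
  (forall t, Rabs (u1 t - u2 t) <= A + C * INR (t - k)) ->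
  Rabs (Series (fun t => gamma ^ t * u1 t) - Series (fun t => gamma ^ t * u2 t))
  <= A / (1 - gamma) + C * (gamma ^ S k / (1 - gamma) ^ 2).
Proof.
  intros Hg HC B1 B2 Hgap.
  assert (HA : 0 <= A).
  { specialize (Hgap 0%nat). simpl (0 - k)%nat in Hgap. simpl INR in Hgap.
    pose proof (Rabs_pos (u1 0%nat - u2 0%nat)). lra. }
  assert (E1 := ex_series_discounted gamma M u1 Hg B1).
  assert (E2 := ex_series_discounted gamma M u2 Hg B2).
  rewrite <- Series_minus by auto. apply Series_abs_bound.
  { apply (ex_series_minus (fun t => gamma ^ t * u1 t) (fun t => gamma ^ t * u2 t)); auto. }
  intro N. eapply Rle_trans; [apply sum_f_R0_triangle|].
  eapply Rle_trans;
    [apply (sum_Rle _ (fun t => A * gamma ^ t + C * (gamma ^ t * INR (t - k))))|].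
  - intros t _. replace (gamma ^ t * u1 t - gamma ^ t * u2 t) with (gamma ^ t * (u1 t - u2 t))
      by ring.
    rewrite Rabs_mult, Rabs_pos_eq by (apply pow_le; lra).
    eapply Rle_trans; [apply Rmult_le_compat_l; [apply pow_le; lra|apply Hgap]|].
    right; ring.
  - rewrite sum_lin. replace (A / (1 - gamma)) with (A * (1 / (1 - gamma))) by (field; lra).
    apply Rplus_le_compat; apply Rmult_le_compat_l; auto.
    + apply geom_partial_le; auto.
    + apply geom_shift_partial_le; auto.
Qed.

Lemma eta_k_Series (rho0 : nat -> R) (gamma rmax : R) (r : nat -> nat -> R) (k : nat)
  (pre : policy) (qpre : dynamics) (post : policy) (qpost : dynamics) :
  dist rho0 -> pol pre -> dyn qpre -> pol post -> dyn qpost -> 0 < gamma < 1 ->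
  (forall s a, Rabs (r s a) <= rmax) ->
  eta_k rho0 gamma r k pre qpre post qpost =
  Series (fun t => gamma ^ t * expected_reward (state_law rho0 k pre qpre post qpost t t) post r).
Proof.
  intros D Ppre Qpre Ppost Qpost Hg Hr.
  assert (Nu : forall t, dist (state_law rho0 k pre qpre post qpost t t))
    by (intro; apply state_law_dist; auto).
  unfold eta_k.
  replace (fun t => gamma ^ t * tsum (fun s => tsum (fun a =>
             state_law rho0 k pre qpre post qpost t t s * post s a * r s a)))
    with (fun t => gamma ^ t * expected_reward (state_law rho0 k pre qpre post qpost t t) post r).
  - apply tsum_Series, (ex_series_discounted gamma rmax). auto.
    intro t. apply (expected_reward_bound _ _ _ _ (Nu t) Ppost Hr).
  - apply functional_extensionality; intro t. f_equal. symmetry.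
    apply tsum2_dsum, (expected_reward_bound _ _ _ rmax (Nu t) Ppost Hr).
Qed.

Lemma L1_le_of_D_TV (p q : nat -> R) (e : R) : dist p -> dist q -> D_TV p q <= e ->
  L1 p q <= 2 * e.
Proof. intros Dp Dq H. rewrite D_TV_L1 in H by auto. lra. Qed.

Lemma step_L1_drift (mu1 mu2 : nat -> R) (pi1 pi2 : policy) (q1 q2 : dynamics) (em ep : R) :
  dist mu1 -> dist mu2 -> pol pi1 -> pol pi2 -> dyn q1 -> dyn q2 ->
  tsum (fun s => tsum (fun a => mu1 s * pi1 s a * D_TV (q1 s a) (q2 s a))) <= em ->
  (forall s, D_TV (pi1 s) (pi2 s) <= ep) ->
  L1 (step pi1 q1 mu1) (step pi2 q2 mu2) <= L1 mu1 mu2 + 2 * (em + ep).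
Proof.
  intros D1 D2 P1 P2 Q1 Q2 Hm Hp.
  rewrite model_err_L1 in Hm by auto.
  assert (Hpol := mean_L1_bound mu1 pi1 pi2 ep D1 P1 P2
                    (fun s => L1_le_of_D_TV _ _ _ (P1 s) (P2 s) (Hp s))).
  pose proof (step_L1 mu1 mu2 pi1 pi2 q1 q2 D1 D2 P1 P2 Q1 Q2). lra.
Qed.

Section BranchedReturnGap.

Variables (rho0 : nat -> R) (gamma rmax : R) (r : nat -> nat -> R) (k : nat)
  (pi1pre pi1post pi2pre pi2post : policy) (q1pre q1post q2pre q2post : dynamics)
  (eps_m_pre eps_m_post eps_pi_pre eps_pi_post : R).

Hypotheses (Drho : dist rho0) (Hgamma : 0 < gamma < 1) (Hr : forall s a, Rabs (r s a) <= rmax)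
  (P1pre : pol pi1pre) (Q1pre : dyn q1pre) (P1post : pol pi1post) (Q1post : dyn q1post)
  (P2pre : pol pi2pre) (Q2pre : dyn q2pre) (P2post : pol pi2post) (Q2post : dyn q2post).

Let nu1 (t i : nat) : nat -> R := state_law rho0 k pi1pre q1pre pi1post q1post t i.
Let nu2 (t i : nat) : nat -> R := state_law rho0 k pi2pre q2pre pi2post q2post t i.

Hypotheses
  (Hm_pre : forall t i, (i < m_t k t)%nat ->
     tsum (fun s => tsum (fun a => nu1 t i s * pi1pre s a * D_TV (q1pre s a) (q2pre s a)))
     <= eps_m_pre)
  (Hm_post : forall t i, (m_t k t <= i < t)%nat ->
     tsum (fun s => tsum (fun a => nu1 t i s * pi1post s a * D_TV (q1post s a) (q2post s a)))
     <= eps_m_post)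
  (Hpi_pre : forall s, D_TV (pi1pre s) (pi2pre s) <= eps_pi_pre)
  (Hpi_post : forall s, D_TV (pi1post s) (pi2post s) <= eps_pi_post).

Lemma nu1_dist (t i : nat) : dist (nu1 t i).
Proof. apply state_law_dist; auto. Qed.

Lemma nu2_dist (t i : nat) : dist (nu2 t i).
Proof. apply state_law_dist; auto. Qed.

Lemma eps_pi_pre_ge0 : 0 <= eps_pi_pre.
Proof.
  pose proof (L1_le_of_D_TV _ _ _ (P1pre 0%nat) (P2pre 0%nat) (Hpi_pre 0%nat)).
  pose proof (L1_range _ _ (P1pre 0%nat) (P2pre 0%nat)). lra.
Qed.

Lemma eps_pi_post_ge0 : 0 <= eps_pi_post.
Proof.
  pose proof (L1_le_of_D_TV _ _ _ (P1post 0%nat) (P2post 0%nat) (Hpi_post 0%nat)).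
  pose proof (L1_range _ _ (P1post 0%nat) (P2post 0%nat)). lra.
Qed.

Lemma eps_m_pre_ge0 : 0 <= eps_m_pre.
Proof.
  eapply Rle_trans; [|apply (Hm_pre (S k) 0); unfold m_t; lia].
  apply model_err_ge0; auto using nu1_dist.
Qed.

Lemma eps_m_post_ge0 : (0 < k)%nat -> 0 <= eps_m_post.
Proof.
  intro Hk. eapply Rle_trans; [|apply (Hm_post 1 0); unfold m_t; lia].
  apply model_err_ge0; auto using nu1_dist.
Qed.

Lemma state_L1_step (t i : nat) : (i < t)%nat ->
  L1 (nu1 t (S i)) (nu2 t (S i)) <= L1 (nu1 t i) (nu2 t i) +
    2 * (if Nat.ltb i (m_t k t) then eps_m_pre + eps_pi_pre else eps_m_post + eps_pi_post).
Proof.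
  intros Hi. unfold nu1, nu2. simpl state_law.
  destruct (Nat.ltb i (m_t k t)) eqn:E.
  - apply Nat.ltb_lt in E.
    apply step_L1_drift; auto using nu1_dist, nu2_dist.
  - apply Nat.ltb_ge in E.
    apply step_L1_drift; auto using nu1_dist, nu2_dist.
Qed.

Lemma state_L1_bound (t i : nat) : (i <= t)%nat ->
  L1 (nu1 t i) (nu2 t i) <=
  2 * (INR (Nat.min i (m_t k t)) * (eps_m_pre + eps_pi_pre)
       + INR (i - m_t k t) * (eps_m_post + eps_pi_post)).
Proof.
  induction i; intro Hi.
  - unfold nu1, nu2. simpl state_law. rewrite L1_self. simpl. lra.
  - specialize (state_L1_step t i ltac:(lia)). specialize (IHi ltac:(lia)).
    destruct (Nat.ltb i (m_t k t)) eqn:E.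
    + apply Nat.ltb_lt in E.
      replace (Nat.min (S i) (m_t k t)) with (S (Nat.min i (m_t k t))) by lia.
      replace (S i - m_t k t)%nat with (i - m_t k t)%nat by lia. rewrite S_INR. lra.
    + apply Nat.ltb_ge in E.
      replace (Nat.min (S i) (m_t k t)) with (Nat.min i (m_t k t)) by lia.
      replace (S i - m_t k t)%nat with (S (i - m_t k t)) by lia. rewrite S_INR. lra.
Qed.

(* At time t the construction has made (t-k)⁺ pre-branch and at most k post-branch steps. *)
Lemma final_state_L1 (t : nat) :
  L1 (nu1 t t) (nu2 t t) <=
  2 * (INR (t - k) * (eps_m_pre + eps_pi_pre) + INR k * (eps_m_post + eps_pi_post)).
Proof.
  pose proof (state_L1_bound t t (le_n t)) as B.
  replace (Nat.min t (m_t k t)) with (t - k)%nat in B by (unfold m_t; lia).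
  assert (INR (t - m_t k t) * (eps_m_post + eps_pi_post)
          <= INR k * (eps_m_post + eps_pi_post)).
  { destruct (Nat.eq_dec k 0) as [Hk|Hk].
    - unfold m_t. rewrite Hk. replace (t - (t - 0))%nat with 0%nat by lia. simpl. lra.
    - pose proof (eps_m_post_ge0 ltac:(lia)). pose proof eps_pi_post_ge0.
      apply Rmult_le_compat_r; [lra|]. apply le_INR. unfold m_t. lia. }
  lra.
Qed.

Lemma reward_step_gap (t : nat) :
  Rabs (expected_reward (nu1 t t) pi1post r - expected_reward (nu2 t t) pi2post r) <=
  2 * rmax * (eps_pi_post + INR k * (eps_m_post + eps_pi_post))
  + 2 * rmax * (eps_m_pre + eps_pi_pre) * INR (t - k).
Proof.
  assert (Hrmax : 0 <= rmax) by (eapply Rle_trans; [apply Rabs_pos|apply (Hr 0%nat 0%nat)]).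
  eapply Rle_trans; [apply expected_reward_gap; auto using nu1_dist, nu2_dist|].
  pose proof (mean_L1_bound (nu1 t t) pi1post pi2post eps_pi_post (nu1_dist t t) P1post P2post
               (fun s => L1_le_of_D_TV _ _ _ (P1post s) (P2post s) (Hpi_post s))).
  pose proof (final_state_L1 t).
  apply Rle_trans with (rmax * (2 * eps_pi_post + 2 * (INR (t - k) * (eps_m_pre + eps_pi_pre)
                                 + INR k * (eps_m_post + eps_pi_post)))).
  - apply Rmult_le_compat_l; lra.
  - right; ring.
Qed.

Lemma branched_return_gap :
  Rabs (eta_k rho0 gamma r k pi1pre q1pre pi1post q1post
        - eta_k rho0 gamma r k pi2pre q2pre pi2post q2post)
  <= 2 * rmax *
     (gamma ^ (S k) / (1 - gamma) ^ 2 * (eps_m_pre + eps_pi_pre)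
      + INR k / (1 - gamma) * (eps_m_post + eps_pi_post)
      + gamma ^ k / (1 - gamma) * eps_pi_pre
      + 1 / (1 - gamma) * eps_pi_post).
Proof.
  assert (Hrmax : 0 <= rmax) by (eapply Rle_trans; [apply Rabs_pos|apply (Hr 0%nat 0%nat)]).
  (* the γ^k ε_π^pre term is slack *)
  assert (Slack : 0 <= 2 * rmax * (gamma ^ k / (1 - gamma) * eps_pi_pre)).
  { pose proof eps_pi_pre_ge0. pose proof (pow_le gamma k ltac:(lra)).
    assert (0 < / (1 - gamma)) by (apply Rinv_0_lt_compat; lra).
    unfold Rdiv. apply Rmult_le_pos; [lra|]. apply Rmult_le_pos; [|lra].
    apply Rmult_le_pos; lra. }
  rewrite !(eta_k_Series rho0 gamma rmax) by auto.
  eapply Rle_trans.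
  - apply (discounted_gap gamma rmax (2 * rmax * (eps_pi_post + INR k * (eps_m_post + eps_pi_post)))
                          (2 * rmax * (eps_m_pre + eps_pi_pre)) k).
    + exact Hgamma.
    + pose proof eps_m_pre_ge0. pose proof eps_pi_pre_ge0. apply Rmult_le_pos; lra.
    + intro t. apply (expected_reward_bound _ _ _ _ (nu1_dist t t) P1post Hr).
    + intro t. apply (expected_reward_bound _ _ _ _ (nu2_dist t t) P2post Hr).
    + apply reward_step_gap.
  - apply Rle_trans with (2 * rmax *
      (gamma ^ (S k) / (1 - gamma) ^ 2 * (eps_m_pre + eps_pi_pre)
       + INR k / (1 - gamma) * (eps_m_post + eps_pi_post)
       + 1 / (1 - gamma) * eps_pi_post)); [right; field; lra|lra].
Qed.

End BranchedReturnGap.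

Theorem lemmaB4
  (rho0 : nat -> R) (gamma rmax : R) (r : nat -> nat -> R) (k : nat)
  (pi1pre : policy) (q1pre : dynamics) (pi1post : policy) (q1post : dynamics)
  (pi2pre : policy) (q2pre : dynamics) (pi2post : policy) (q2post : dynamics)
  (eps_m_pre eps_m_post eps_pi_pre eps_pi_post : R)
  (Hrho : is_dist rho0)
  (Hgamma : 0 < gamma < 1)
  (Hr : forall s a, Rabs (r s a) <= rmax)
  (H1pre : is_policy pi1pre) (H1q : is_dynamics q1pre)
  (H1post : is_policy pi1post) (H1qp : is_dynamics q1post)
  (H2pre : is_policy pi2pre) (H2q : is_dynamics q2pre)
  (H2post : is_policy pi2post) (H2qp : is_dynamics q2post)
  (Hm_pre : forall t i, (i < m_t k t)%nat ->
     tsum (fun s => tsum (fun a =>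
       state_law rho0 k pi1pre q1pre pi1post q1post t i s * pi1pre s a *
       D_TV (q1pre s a) (q2pre s a))) <= eps_m_pre)
  (Hm_post : forall t i, (m_t k t <= i < t)%nat ->
     tsum (fun s => tsum (fun a =>
       state_law rho0 k pi1pre q1pre pi1post q1post t i s * pi1post s a *
       D_TV (q1post s a) (q2post s a))) <= eps_m_post)
  (Hpi_pre : forall s, D_TV (pi1pre s) (pi2pre s) <= eps_pi_pre)
  (Hpi_post : forall s, D_TV (pi1post s) (pi2post s) <= eps_pi_post) :
  Rabs (eta_k rho0 gamma r k pi1pre q1pre pi1post q1post
        - eta_k rho0 gamma r k pi2pre q2pre pi2post q2post)
  <= 2 * rmax *
     (gamma ^ (S k) / (1 - gamma) ^ 2 * (eps_m_pre + eps_pi_pre)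
      + INR k / (1 - gamma) * (eps_m_post + eps_pi_post)
      + gamma ^ k / (1 - gamma) * eps_pi_pre
      + 1 / (1 - gamma) * eps_pi_post).
Proof.
  (* only the [infinite_sum] form of the distribution hypotheses has to be converted *)
  apply branched_return_gap; auto using is_dist_dist, is_policy_pol, is_dynamics_dyn.
Qed.
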